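(* Let $\mathfrak{n}=\mathfrak{v}\oplus\mathfrak{z}$ be a fat (non-singular) 2-step nilpotent real Lie algebra with center $\mathfrak{z}$, and let $G(\mathfrak{n})$ be its group of graded automorphisms $\begin{pmatrix} a&0\\0&b\end{pmatrix}$, $a\in SL(\mathfrak{v})$, $b\in GL(\mathfrak{z})$, $b([u,v])=[au,av]$ for all $u,v\in\mathfrak{v}$. Then there is a positive definite inner product on $\mathfrak{z}$ that is invariant under (the action on $\mathfrak{z}$ of) $G(\mathfrak{n})$, i.e. every $b$ occurring in an element of $G(\mathfrak{n})$ is orthogonal for it.
   Context: A 2-step nilpotent real Lie algebra $\mathfrak{n}$ with center $\mathfrak{z}$ is written $\mathfrak{n}=\mathfrak{v}\oplus\mathfrak{z}$ with $\mathfrak{v}\cong\mathfrak{n}/\mathfrak{z}$; its structure is encoded by an antisymmetric bilinear map $[\ ,\ ]:\mathfrak{v}\times\mathfrak{v}\to\mathfrak{z}$. It is called fat (non-singular) if for every nonzero $\lambda\in\mathfrak{z}^*$ the 2-form $(u,v)\mapsto\lambda([u,v])$ on $\mathfrak{v}$ is non-degenerate (equivalently, $\operatorname{ad}x:\mathfrak{n}\to\mathfrak{z}$ is onto for every $x\notin\mathfrak{z}$). *)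

From HB Require Import structures.
From mathcomp Require Import all_boot all_order all_algebra.
From mathcomp Require Import reals.
Set Implicit Arguments. Unset Strict Implicit. Unset Printing Implicit Defensive.
Import Order.TTheory GRing.Theory Num.Theory.
Local Open Scope ring_scope.

(* A 2-step nilpotent Lie algebra n = v (+) z with v = R^n, z = R^m
   (row vectors), given by its bracket br : v x v -> z. *)

Definition bilinear_antisym (R : realType) (n m : nat)
  (br : 'rV[R]_n -> 'rV[R]_n -> 'rV[R]_m) : Prop :=
  (forall (c : R) (u u' v : 'rV[R]_n), br (c *: u + u') v = c *: br u v + br u' v)
  /\ (forall u v : 'rV[R]_n, br u v = - br v u).

Definition nonabelian (R : realType) (n m : nat)
  (br : 'rV[R]_n -> 'rV[R]_n -> 'rV[R]_m) : Prop :=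
  exists u v, br u v != 0.

Definition center_is_z (R : realType) (n m : nat)
  (br : 'rV[R]_n -> 'rV[R]_n -> 'rV[R]_m) : Prop :=
  forall u, (forall v, br u v = 0) -> u = 0.

Definition fat (R : realType) (n m : nat)
  (br : 'rV[R]_n -> 'rV[R]_n -> 'rV[R]_m) : Prop :=
  forall lam : 'cV[R]_m, lam != 0 ->
    forall u, (forall v, (br u v *m lam) 0 0 = 0) -> u = 0.

(* (a, b) in G(n): a in SL(v), b in GL(z), b [u,v] = [a u, a v]
   (maps act on row vectors on the right: x |-> x *m a) *)
Definition graded_aut (R : realType) (n m : nat)
  (br : 'rV[R]_n -> 'rV[R]_n -> 'rV[R]_m) (a : 'M[R]_n) (b : 'M[R]_m) : Prop :=
  \det a = 1 /\ b \in unitmx /\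
  forall u v, br u v *m b = br (u *m a) (v *m a).

(* S is the Gram matrix of a positive definite inner product on z:
   <x, y> = x S y^T *)
Definition pos_def_inner (R : realType) (m : nat) (S : 'M[R]_m) : Prop :=
  S^T = S /\ forall x : 'rV[R]_m, x != 0 -> 0 < (x *m S *m x^T) 0 0.

From HB Require Import structures.
From mathcomp Require Import all_boot all_order all_algebra.
From mathcomp Require Import reals.
From mathcomp Require Import all_classical all_reals all_analysis.
From mathcomp Require Import perm ring lra.
Import Order.TTheory GRing.Theory Num.Theory.
Import numFieldTopology.Exports numFieldNormedType.Exports.
Set Implicit Arguments. Unset Strict Implicit. Unset Printing Implicit Defensive.
Local Open Scope classical_set_scope.
Local Open Scope ring_scope.

(* The polynomial [w |-> det] of the 2-form [w^T [ , ]] on [v] is invariant under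
   the action [w |-> w b^T] of [G(n)] on [z^*] (because [det a = 1]), and fatness
   makes it vanish only at [0]. Being homogeneous, it confines every orbit between
   two spheres, so the [b] form a bounded matrix group. A bounded group [G] fixes a
   positive definite form: on the closed convex [G]-stable set of matrices whose
   quadratic form dominates [w |-> inf_(g in G) |w g|^2], the uniformly convex
   function [T |-> sup_(g in G) |g T g^T|^2] has a unique minimizer, which is
   therefore symmetric and [G]-invariant. *)

Section MatrixNorms.
Variable R : realFieldType.

Definition frob2 p q (X : 'M[R]_(p, q)) : R := \sum_i \sum_j X i j ^+ 2.

Lemma frob2_ge0 p q (X : 'M[R]_(p, q)) : 0 <= frob2 X.
Proof. by apply: sumr_ge0 => i _; apply: sumr_ge0 => j _; exact: sqr_ge0. Qed.

Lemma frob2_tr p q (X : 'M[R]_(p, q)) : frob2 X^T = frob2 X.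
Proof.
by rewrite /frob2 exchange_big; apply: eq_bigr => i _; under eq_bigr do rewrite mxE.
Qed.

Lemma frob2_row n (w : 'rV[R]_n) : frob2 w = (w *m w^T) 0 0.
Proof. by rewrite /frob2 big_ord1 mxE; apply: eq_bigr => j _; rewrite mxE expr2. Qed.

Lemma frob2_midpoint p q (X Y : 'M[R]_(p, q)) :
  frob2 (2^-1 *: (X + Y)) = (frob2 X + frob2 Y) / 2 - frob2 (X - Y) / 4.
Proof.
rewrite /frob2 -big_split /= !mulr_suml -sumrB; apply: eq_bigr => i _.
rewrite -big_split /= !mulr_suml -sumrB; apply: eq_bigr => j _.
by rewrite !mxE; field.
Qed.

Lemma mx_norm_entry p q (X : 'M[R]_(p, q)) i j : `|X i j| <= `|X|.
Proof.
rewrite -[`|X|]/(mx_norm X) mx_normrE; apply/bigmax_geP; right => /=.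
by exists (i, j).
Qed.

Lemma mx_norm_le p q (X : 'M[R]_(p, q)) (c : R) :
  0 <= c -> (forall i j, `|X i j| <= c) -> `|X| <= c.
Proof. by move=> c0 Xc; rewrite -[`|X|]/(mx_norm X) mx_normrE; apply/bigmax_leP. Qed.

Lemma mx_norm_tr p q (X : 'M[R]_(p, q)) : `|X^T| = `|X|.
Proof.
apply/eqP; rewrite eq_le !mx_norm_le // => i j; rewrite ?mxE ?mx_norm_entry //.
by have := mx_norm_entry X^T j i; rewrite mxE.
Qed.

Lemma mx_norm_mulmx p q r (X : 'M[R]_(p, q)) (Y : 'M[R]_(q, r)) :
  `|X *m Y| <= q%:R * (`|X| * `|Y|).
Proof.
apply: mx_norm_le => [|i j]; first by rewrite !mulr_ge0.
rewrite mxE; apply: le_trans (ler_norm_sum _ _ _) _.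
have -> : q%:R * (`|X| * `|Y|) = \sum_(k < q) `|X| * `|Y|.
  by rewrite sumr_const card_ord mulr_natl.
apply: ler_sum => k _.
by rewrite normrM ler_pM ?mx_norm_entry.
Qed.

Lemma sqr_mx_norm_le_frob2 p q (X : 'M[R]_(p, q)) : `|X| ^+ 2 <= frob2 X.
Proof.
have [->|] := eqVneq `|X| 0; first by rewrite expr0n frob2_ge0.
rewrite -[`|X|]/(mx_norm X) => /mx_norm_neq0 [[i j] /= ->].
rewrite real_normK ?num_real // /frob2 (bigD1 i) //= (bigD1 j) //= -addrA lerDl.
rewrite addr_ge0 ?sumr_ge0 // => [k _|k _]; first exact: sqr_ge0.
by apply: sumr_ge0 => l _; exact: sqr_ge0.
Qed.

Lemma frob2_le_sqr_mx_norm p q (X : 'M[R]_(p, q)) :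
  frob2 X <= (p * q)%:R * `|X| ^+ 2.
Proof.
have -> : (p * q)%:R * `|X| ^+ 2 = \sum_(i < p) \sum_(j < q) `|X| ^+ 2.
  by rewrite !sumr_const !card_ord -mulrnA mulr_natl mulnC.
apply: ler_sum => i _; apply: ler_sum => j _.
by rewrite -real_normK ?num_real // lerXn2r ?nnegrE ?mx_norm_entry.
Qed.

End MatrixNorms.

Section EntrywiseContinuity.
Variables (R : realType) (T : topologicalType).

Lemma continuous_mulmx_entry p q r (f : T -> 'M[R]_(p, q)) (g : T -> 'M[R]_(q, r)) :
  (forall i j, continuous (fun x => f x i j)) ->
  (forall i j, continuous (fun x => g x i j)) ->
  forall i j, continuous (fun x => (f x *m g x) i j).
Proof.
move=> cf cg i j.
have -> : (fun x => (f x *m g x) i j) = fun x => \sum_k f x i k * g x k j.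
  by apply/funext => x; rewrite mxE.
apply: continuous_big => [|k _]; first exact: add_continuous.
by move=> x; apply: continuousM; [exact: cf | exact: cg].
Qed.

Lemma continuous_det n (f : T -> 'M[R]_n) :
  (forall i j, continuous (fun x => f x i j)) -> continuous (fun x => \det (f x)).
Proof.
move=> cf; apply: continuous_big => [|s _]; first exact: add_continuous.
move=> x; apply: (@continuousM _ _ (fun=> (-1) ^+ s)); first exact: cst_continuous.
by apply: continuous_big => [|i _]; [exact: mul_continuous | exact: cf].
Qed.

Lemma continuous_frob2 p q (f : T -> 'M[R]_(p, q)) :
  (forall i j, continuous (fun x => f x i j)) -> continuous (fun x => frob2 (f x)).
Proof.
move=> cf; apply: continuous_big => [|i _]; first exact: add_continuous.
apply: continuous_big => [|j _]; first exact: add_continuous.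
by move=> x; apply: continuousM; exact: cf.
Qed.

End EntrywiseContinuity.

Lemma continuous_mulmx_cst_entry (R : realType) p q r s
    (A : 'M[R]_(p, q)) (B : 'M[R]_(r, s)) i j :
  continuous (fun X : 'M[R]_(q, r) => (A *m X *m B) i j).
Proof.
apply: (continuous_mulmx_entry (f := fun X => A *m X) (g := fun=> B)) => k l.
  apply: (continuous_mulmx_entry (f := fun=> A) (g := id)) => k' l'.
    exact: cst_continuous.
  exact: coord_continuous.
exact: cst_continuous.
Qed.

Section Congruence.
Variables (R : comPzRingType) (m : nat).
Implicit Types g h T X Y : 'M[R]_m.

Definition congmx g T := g *m T *m g^T.

Lemma congmx1 T : congmx 1 T = T.
Proof. by rewrite /congmx trmx1 mul1mx mulmx1. Qed.

Lemma congmxM g h T : congmx g (congmx h T) = congmx (g *m h) T.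
Proof. by rewrite /congmx trmx_mul !mulmxA. Qed.

Lemma congmx_tr g T : congmx g T^T = (congmx g T)^T.
Proof. by rewrite /congmx !trmx_mul trmxK mulmxA. Qed.

Lemma congmxD g X Y : congmx g (X + Y) = congmx g X + congmx g Y.
Proof. by rewrite /congmx mulmxDr mulmxDl. Qed.

Lemma congmxB g X Y : congmx g (X - Y) = congmx g X - congmx g Y.
Proof. by rewrite /congmx mulmxBr mulmxBl. Qed.

Lemma congmxZ g (a : R) X : congmx g (a *: X) = a *: congmx g X.
Proof. by rewrite /congmx -scalemxAr -scalemxAl. Qed.

Lemma quad_congmx (w : 'rV[R]_m) g T :
  w *m congmx g T *m w^T = (w *m g) *m T *m (w *m g)^T.
Proof. by rewrite /congmx trmx_mul !mulmxA. Qed.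

Lemma mulmx_tr_entry p r (A : 'M[R]_(p, m)) (X : 'M[R]_m) (B : 'M[R]_(r, m)) i j :
  (A *m X *m B^T) i j = (row i A *m X *m (row j B)^T) 0 0.
Proof. by rewrite -row_mul !mxE; apply: eq_bigr => k _; rewrite !mxE. Qed.

End Congruence.

Section BoundedMatrixGroup.
Variables (R : realType) (m : nat) (G : set 'M[R]_m) (K : R).
Hypothesis G1 : G 1.
Hypothesis GM : forall g h, G g -> G h -> G (g *m h).
Hypothesis GV : forall g, G g -> g \in unitmx /\ G (invmx g).
Hypothesis GK : forall g, G g -> `|g| <= K.
Implicit Types (g T Y : 'M[R]_m) (w : 'rV[R]_m).

(* The [1 +] keeps [c] positive even when [m = 0]. *)
Let c := 1 + (m%:R * K) ^+ 2.

Let K_ge0 : 0 <= K.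
Proof. exact: le_trans (normr_ge0 _) (GK G1). Qed.

Let c_gt0 : 0 < c.
Proof. by rewrite ltr_pwDl ?sqr_ge0. Qed.

Lemma norm_congmx_le g Y : G g -> `|congmx g Y| <= c * `|Y|.
Proof.
move=> /GK gK; have mK : 0 <= m%:R * K by rewrite mulr_ge0.
have gY : `|g *m Y| <= m%:R * K * `|Y|.
  by rewrite -mulrA; apply: le_trans (mx_norm_mulmx _ _) _; rewrite ler_wpM2l ?ler_wpM2r.
apply: le_trans (mx_norm_mulmx _ _) _; rewrite mx_norm_tr.
apply: (@le_trans _ _ (m%:R * (m%:R * K * `|Y| * K))).
  by rewrite ler_wpM2l // ler_pM.
have -> : m%:R * (m%:R * K * `|Y| * K) = (m%:R * K) ^+ 2 * `|Y| by ring.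
by rewrite ler_wpM2r // lerDr.
Qed.

Lemma norm_congmx_ge g Y : G g -> `|Y| <= c * `|congmx g Y|.
Proof.
move=> Gg; have [gU Gg'] := GV Gg.
by rewrite -{1}[Y](congmx1 Y) -[1](mulVmx gU) -congmxM norm_congmx_le.
Qed.

Lemma sqr_norm_le_mulmx w g : G g -> `|w| ^+ 2 <= c * `|w *m g| ^+ 2.
Proof.
move=> Gg; have [gU /GK g'K] := GV Gg.
have wg : `|w| <= m%:R * K * `|w *m g|.
  rewrite -{1}[w](mulmxK gU); apply: le_trans (mx_norm_mulmx _ _) _.
  by rewrite -mulrA ler_wpM2l // mulrC ler_wpM2r.
apply: (@le_trans _ _ ((m%:R * K) ^+ 2 * `|w *m g| ^+ 2)).
  by rewrite -exprMn lerXn2r ?nnegrE ?mulr_ge0.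
by rewrite ler_wpM2r ?sqr_ge0 // lerDr.
Qed.

Definition orbit_sup T : R := sup [set frob2 (congmx g T) | g in G].

Let orbit_sup_bounded T : has_ubound [set frob2 (congmx g T) | g in G].
Proof.
exists ((m * m)%:R * (c * `|T|) ^+ 2) => _ [g Gg <-].
apply: le_trans (frob2_le_sqr_mx_norm _) _.
by rewrite ler_wpM2l // lerXn2r ?nnegrE ?norm_congmx_le ?mulr_ge0 ?(ltW c_gt0).
Qed.

Lemma orbit_sup_ub g T : G g -> frob2 (congmx g T) <= orbit_sup T.
Proof. by move=> Gg; apply: ub_le_sup (orbit_sup_bounded T) _ _; exists g. Qed.

Lemma orbit_sup_le T B :
  (forall g, G g -> frob2 (congmx g T) <= B) -> orbit_sup T <= B.
Proof.
move=> TB; apply: ge_sup => [|_ [g Gg <-]]; last exact: TB.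
by exists (frob2 (congmx 1 T)), 1.
Qed.

Lemma orbit_sup_ge0 T : 0 <= orbit_sup T.
Proof. exact: le_trans (frob2_ge0 _) (orbit_sup_ub T G1). Qed.

Lemma orbit_sup_congmx g T : G g -> orbit_sup (congmx g T) <= orbit_sup T.
Proof.
move=> Gg; apply: orbit_sup_le => h Gh.
by rewrite congmxM; exact: orbit_sup_ub (GM Gh Gg).
Qed.

Lemma orbit_sup_tr T : orbit_sup T^T <= orbit_sup T.
Proof.
by apply: orbit_sup_le => g Gg; rewrite congmx_tr frob2_tr; exact: orbit_sup_ub.
Qed.

(* Uniform convexity, from the parallelogram law for [frob2] and [norm_congmx_ge]. *)
Lemma orbit_sup_midpoint T1 T2 :
  `|T1 - T2| ^+ 2 <=
    4 * c ^+ 2 * ((orbit_sup T1 + orbit_sup T2) / 2 - orbit_sup (2^-1 *: (T1 + T2))).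
Proof.
have c2 : 0 < 4 * c ^+ 2 by rewrite mulr_gt0 ?exprn_gt0.
rewrite -ler_pdivrMl //.
suff : orbit_sup (2^-1 *: (T1 + T2)) <=
    (orbit_sup T1 + orbit_sup T2) / 2 - `|T1 - T2| ^+ 2 / (4 * c ^+ 2) by lra.
apply: orbit_sup_le => g Gg; rewrite congmxZ congmxD frob2_midpoint -congmxB.
have h1 := orbit_sup_ub T1 Gg; have h2 := orbit_sup_ub T2 Gg.
have h3 : `|T1 - T2| ^+ 2 <= c ^+ 2 * frob2 (congmx g (T1 - T2)).
  apply: le_trans (ler_wpM2l (sqr_ge0 c) (sqr_mx_norm_le_frob2 _)).
  by rewrite -exprMn lerXn2r ?nnegrE ?mulr_ge0 ?(ltW c_gt0) ?norm_congmx_ge.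
have h4 : `|T1 - T2| ^+ 2 / (4 * c ^+ 2) <= frob2 (congmx g (T1 - T2)) / 4.
  set F := frob2 _ in h3 *; rewrite ler_pdivrMr //.
  by have -> : F / 4 * (4 * c ^+ 2) = c ^+ 2 * F by field.
lra.
Qed.

Lemma orbit_sup_lim_le (u : nat -> 'M[R]_m) T B :
  u @ \oo --> T -> (forall k, orbit_sup (u k) <= B + k.+1%:R^-1) -> orbit_sup T <= B.
Proof.
move=> uT uB; apply: orbit_sup_le => g Gg.
have cf : continuous (fun X => frob2 (congmx g X)).
  by apply: continuous_frob2 => i j; exact: continuous_mulmx_cst_entry.
have lhs : (fun k => frob2 (congmx g (u k))) @ \oo --> frob2 (congmx g T).
  exact: (@continuous_cvg _ _ _ _ _ _ _ _ (cf T) uT).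
have rhs : (fun k => B + k.+1%:R^-1) @ \oo --> B.
  by rewrite -[X in _ --> X]addr0; apply: cvgD; [exact: cvg_cst | exact: cvg_harmonic].
apply: ler_cvg_to lhs rhs _; apply: nearW => k.
exact: le_trans (orbit_sup_ub _ Gg) (uB k).
Qed.

(* [w T w^T >= inf_(g in G) frob2 (w *m g)] for all [w], stated without an infimum. *)
Definition above_orbit_inf T := forall w (e : R), 0 < e ->
  exists2 g, G g & frob2 (w *m g) <= (w *m T *m w^T) 0 0 + e.

Lemma above_orbit_inf1 : above_orbit_inf 1.
Proof. by move=> w e e0; exists 1 => //; rewrite mulmx1 frob2_row lerDl ltW. Qed.

Lemma above_orbit_inf_midpoint T1 T2 :
  above_orbit_inf T1 -> above_orbit_inf T2 -> above_orbit_inf (2^-1 *: (T1 + T2)).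
Proof.
move=> T1w T2w w e e0; have [g1 Gg1 h1] := T1w w e e0; have [g2 Gg2 h2] := T2w w e e0.
have -> : (w *m (2^-1 *: (T1 + T2)) *m w^T) 0 0 =
    ((w *m T1 *m w^T) 0 0 + (w *m T2 *m w^T) 0 0) / 2.
  by rewrite -scalemxAr -scalemxAl mulmxDr mulmxDl !mxE mulrC.
have [le12|le21] := leP (frob2 (w *m g1)) (frob2 (w *m g2)).
  by exists g1 => //; lra.
by exists g2 => //; lra.
Qed.

Lemma above_orbit_inf_congmx g T :
  G g -> above_orbit_inf T -> above_orbit_inf (congmx g T).
Proof.
move=> Gg Tw w e e0; have [h Gh wgh] := Tw (w *m g) e e0.
by exists (g *m h); [exact: GM | rewrite quad_congmx mulmxA].
Qed.

Lemma above_orbit_inf_tr T : above_orbit_inf T -> above_orbit_inf T^T.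
Proof.
move=> Tw w e e0; have [g Gg wg] := Tw w e e0; exists g => //.
have -> : w *m T^T *m w^T = (w *m T *m w^T)^T by rewrite !trmx_mul trmxK mulmxA.
by rewrite mxE.
Qed.

Lemma above_orbit_inf_lim (u : nat -> 'M[R]_m) T :
  u @ \oo --> T -> (forall k, above_orbit_inf (u k)) -> above_orbit_inf T.
Proof.
move=> uT uw w e e0.
have cq := continuous_mulmx_cst_entry (A := w) (B := w^T) (i := 0) (j := 0).
have qT : (fun k => (w *m u k *m w^T) 0 0) @ \oo --> (w *m T *m w^T) 0 0.
  exact: (@continuous_cvg _ _ _ _ _ _ _ _ (cq T) uT).
have [N _ qN] := cvgr_dist_lt _ _ qT _ (divr_gt0 e0 (ltr0Sn _ 1)).
have [g Gg wg] := uw N w _ (divr_gt0 e0 (ltr0Sn _ 1)); exists g => //.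
have := qN N (leqnn N); rewrite ltr_norml /= => /andP[hN _].
lra.
Qed.

Lemma above_orbit_inf_pos T w :
  above_orbit_inf T -> w != 0 -> 0 < (w *m T *m w^T) 0 0.
Proof.
move=> Tw w0; have w2 : 0 < `|w| ^+ 2 / c by rewrite divr_gt0 ?exprn_gt0 ?normr_gt0.
have [g Gg wg] := Tw w _ (divr_gt0 w2 (ltr0Sn _ 1)).
have : `|w| ^+ 2 / c <= frob2 (w *m g).
  rewrite ler_pdivrMr // mulrC; apply: le_trans (sqr_norm_le_mulmx w Gg) _.
  by rewrite ler_wpM2l ?(ltW c_gt0) ?sqr_mx_norm_le_frob2.
lra.
Qed.

Lemma orbit_sup_argmin_unique T0 T :
  above_orbit_inf T0 -> above_orbit_inf T -> orbit_sup T <= orbit_sup T0 ->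
  (forall T', above_orbit_inf T' -> orbit_sup T0 <= orbit_sup T') -> T = T0.
Proof.
move=> T0w Tw TT0 T0min.
have := T0min _ (above_orbit_inf_midpoint Tw T0w).
have := orbit_sup_midpoint T T0; set d := `|T - T0| ^+ 2 => dle mid.
have : d <= 0.
  apply: le_trans dle _; apply: mulr_ge0_le0; [by rewrite mulr_ge0 ?sqr_ge0 | lra].
by move=> d0; apply/eqP; rewrite -subr_eq0 -normr_eq0 -sqrf_eq0 eq_le d0 sqr_ge0.
Qed.

Lemma cvg_orbit_sup_minimizing (u : nat -> 'M[R]_m) (mu : R) :
  (forall k, above_orbit_inf (u k)) ->
  (forall T, above_orbit_inf T -> mu <= orbit_sup T) ->
  (forall k, orbit_sup (u k) <= mu + k.+1%:R^-1) -> cvg (u @ \oo).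
Proof.
move=> uw mu_le umu.
have c4 : 0 < 4 * c ^+ 2 by rewrite mulr_gt0 ?exprn_gt0.
have uij i j : (i <= j)%N -> `|u i - u j| ^+ 2 <= 4 * c ^+ 2 * i.+1%:R^-1.
  move=> ij; apply: le_trans (orbit_sup_midpoint _ _) _.
  apply: ler_wpM2l; first exact: ltW.
  have := mu_le _ (above_orbit_inf_midpoint (uw i) (uw j)).
  have := umu i; have := umu j.
  have : j.+1%:R^-1 <= i.+1%:R^-1 :> R by rewrite lef_pV2 ?posrE // ler_nat.
  move: (i.+1%:R^-1) (j.+1%:R^-1) => a b *; lra.
apply/cauchy_cvgP; apply: cauchy_exP => e e0.
have e4 : 0 < e ^+ 2 / (4 * c ^+ 2) by rewrite divr_gt0 ?exprn_gt0.
have [N _ /(_ N (leqnn N)) Ne] := near_infty_natSinv_lt (PosNum e4).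
exists (u N), N => // k /= Nk; rewrite mx_norm_ball /ball_ /=.
rewrite -(ltr_pXn2r (_ : (0 < 2)%N)) ?nnegrE ?(ltW e0) //.
apply: le_lt_trans (uij _ _ Nk) _; rewrite mulrC -ltr_pdivlMr //.
Qed.

Lemma exists_orbit_sup_argmin : exists2 T, above_orbit_inf T &
  forall T', above_orbit_inf T' -> orbit_sup T <= orbit_sup T'.
Proof.
pose D := [set orbit_sup T | T in above_orbit_inf].
have D_inf : has_inf D.
  split; first by exists (orbit_sup 1), 1; first exact: above_orbit_inf1.
  by exists 0 => _ [T _ <-]; exact: orbit_sup_ge0.
have mu_le T : above_orbit_inf T -> inf D <= orbit_sup T.
  by move=> Tw; apply: (ge_inf D_inf.2); exists T.
have near_inf k : exists T, above_orbit_inf T /\ orbit_sup T <= inf D + k.+1%:R^-1.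
  have k0 : 0 < k.+1%:R^-1 :> R by rewrite invr_gt0.
  have [_ [T Tw <-] lt] := inf_adherent k0 D_inf.
  by exists T; split => //; exact: ltW.
have [u uP] := choice near_inf.
have cu := cvg_orbit_sup_minimizing (fun k => (uP k).1) mu_le (fun k => (uP k).2).
exists (lim (u @ \oo)); first exact: above_orbit_inf_lim cu (fun k => (uP k).1).
move=> T' T'w; apply: le_trans (mu_le _ T'w).
exact: orbit_sup_lim_le cu (fun k => (uP k).2).
Qed.

Theorem bounded_matrix_group_invariant_form :
  exists S : 'M[R]_m, pos_def_inner S /\ forall g, G g -> g *m S *m g^T = S.
Proof.
have [T Tw Tmin] := exists_orbit_sup_argmin.
exists T; split.
  split=> [|w]; last exact: above_orbit_inf_pos.
  exact: orbit_sup_argmin_unique Tw (above_orbit_inf_tr Tw) (orbit_sup_tr T) Tmin.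
move=> g Gg.
apply: orbit_sup_argmin_unique Tw (above_orbit_inf_congmx Gg Tw) _ Tmin.
exact: orbit_sup_congmx.
Qed.

End BoundedMatrixGroup.

Section HomogeneousForms.
Variables (R : realType) (m d : nat) (f : 'rV[R]_m -> R).
Hypothesis m_gt0 : (0 < m)%N.
Hypothesis d_gt0 : (0 < d)%N.
Hypothesis f_cont : continuous f.
Hypothesis f_hom : forall t w, f (t *: w) = t ^+ d * f w.
Hypothesis f_pos : forall w, w != 0 -> 0 < f w.

Lemma homogeneous_sandwich : exists2 c : R, 0 < c &
  exists C : R, forall w, c * `|w| ^+ d <= f w <= C * `|w| ^+ d.
Proof.
pose S := [set w : 'rV[R]_m | `|w| = 1].
have S_compact : compact S.
  apply: bounded_closed_compact.
    rewrite /= /bounded_near; near=> M => w /= ->; near: M.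
    by apply: nbhs_pinfty_ge; rewrite num_real.
  exact: (continuous_closedP _).1 (@norm_continuous _ _) _ (@closed_eq _ 1).
have S_ne : S !=set0.
  pose w1 : 'rV[R]_m := const_mx 1.
  have w0 : w1 != 0.
    apply/eqP => /matrixP /(_ 0 (Ordinal m_gt0)).
    by rewrite !mxE => /eqP; rewrite oner_eq0.
  by exists (`|w1|^-1 *: w1); rewrite /S /= normfZV.
have [wmin /[!inE] Smin minP] := EVT_min_rV S_ne S_compact (continuous_subspaceT f_cont).
have [wmax _ maxP] := EVT_max_rV S_ne S_compact (continuous_subspaceT f_cont).
exists (f wmin).
  by apply: f_pos; apply: contra_eqN Smin => /eqP ->; rewrite normr0 eq_sym oner_eq0.
exists (f wmax) => w; have [->|w0] := eqVneq w 0.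
  have f0 : f 0 = 0 by rewrite -(scale0r 0) f_hom expr0n gtn_eqF // mul0r.
  by rewrite f0 normr0 expr0n gtn_eqF // !mulr0 lexx.
have uS : `|w|^-1 *: w \in S by rewrite inE /S /= normfZV.
have -> : f w = `|w| ^+ d * f (`|w|^-1 *: w).
  by rewrite -f_hom scalerA divff ?normr_eq0 // scale1r.
by rewrite ![_ * `|w| ^+ d]mulrC !ler_pM2l ?exprn_gt0 ?normr_gt0 ?minP ?maxP.
Unshelve. all: by end_near.
Qed.

Lemma homogeneous_invariant_bounded :
  exists K : R, forall A : 'M[R]_m, (forall w, f (w *m A) = f w) -> `|A| <= K.
Proof.
have [c c0 [C fcC]] := homogeneous_sandwich.
pose K := Num.max 1 (C / c); have K1 : 1 <= K by rewrite le_max lexx.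
have K0 : 0 <= K by exact: le_trans K1.
exists K => A Af; apply: mx_norm_le => // i j.
have wA (w : 'rV[R]_m) : `|w *m A| <= K * `|w|.
  have : c * `|w *m A| ^+ d <= C * `|w| ^+ d.
    have /andP[lo _] := fcC (w *m A); have /andP[_ hi] := fcC w.
    by apply: le_trans lo _; rewrite Af.
  rewrite mulrC -ler_pdivlMr // mulrAC => h.
  rewrite -(ler_pXn2r d_gt0) ?nnegrE ?mulr_ge0 // exprMn; apply: le_trans h _.
  rewrite ler_wpM2r ?exprn_ge0 //; apply: le_trans (ler_eXnr d_gt0 K1).
  by rewrite le_max lexx orbT.
have e1 : `|delta_mx 0 i : 'rV[R]_m| <= 1.
  by apply: mx_norm_le => // k l; rewrite mxE; case: (_ && _); rewrite ?normr1 ?normr0.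
have := mx_norm_entry (row i A) 0 j; rewrite mxE => Aij.
have := wA (delta_mx 0 i); rewrite -rowE => iA.
by apply: le_trans Aij (le_trans iA _); rewrite -[leRHS]mulr1 ler_wpM2l.
Qed.

End HomogeneousForms.

Lemma linear_form_coord (R : pzRingType) n (f : 'rV[R]_n -> R) :
  (forall c u v, f (c *: u + v) = c * f u + f v) ->
  forall u, f u = \sum_i u 0 i * f (delta_mx 0 i).
Proof.
move=> fL u; have f0 : f 0 = 0.
  by have := fL (-1) 0 0; rewrite scaleN1r addNr mulN1r addNr.
by rewrite {1}(row_sum_delta u); elim/big_rec2: _ => // i y x _ <-; rewrite fL.
Qed.

Section FatLieAlgebras.
Variables (R : realType) (n m : nat) (br : 'rV[R]_n -> 'rV[R]_n -> 'rV[R]_m).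
Hypothesis br_bil : bilinear_antisym br.
Implicit Types (u v : 'rV[R]_n) (w : 'rV[R]_m).

(* The Gram matrix of the 2-form [(u, v) |-> lambda [u, v]] on [v], where the
   functional [lambda] on [z] is the column [w^T]. *)
Definition form_mx w : 'M[R]_n :=
  \matrix_(i, j) (br (delta_mx 0 i) (delta_mx 0 j) *m w^T) 0 0.

Lemma form_mxE u v w : (br u v *m w^T) 0 0 = (u *m form_mx w *m v^T) 0 0.
Proof.
have [brL brN] := br_bil.
pose beta x y := (br x y *m w^T) 0 0.
have betaL y c x x' : beta (c *: x + x') y = c * beta x y + beta x' y.
  by rewrite /beta brL mulmxDl -scalemxAl !mxE.
have betaR x c y y' : beta x (c *: y + y') = c * beta x y + beta x y'.
  have betaN a b : beta a b = - beta b a by rewrite /beta brN mulNmx mxE.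
  by rewrite betaN betaL (betaN x y) (betaN x y') opprD mulrN.
rewrite -/(beta u v) (linear_form_coord (betaL v)) -mulmxA mxE.
apply: eq_bigr => i _; congr (_ * _).
rewrite (linear_form_coord (betaR _)) mxE; apply: eq_bigr => j _.
by rewrite [form_mx w i j]mxE [v^T j 0]mxE mulrC.
Qed.

Lemma form_mx_graded a b w :
  graded_aut br a b -> form_mx (w *m b^T) = a *m form_mx w *m a^T.
Proof.
move=> [_ [_ abr]]; apply/matrixP => i j.
by rewrite [LHS]mxE trmx_mul trmxK mulmxA abr form_mxE [RHS]mulmx_tr_entry !rowE.
Qed.

Lemma det_form_mx_graded a b w :
  graded_aut br a b -> \det (form_mx (w *m b^T)) = \det (form_mx w).
Proof.
move=> ab; rewrite (form_mx_graded _ ab) !det_mulmx det_tr.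
by case: ab => -> _; rewrite mul1r mulr1.
Qed.

Lemma det_form_mx_neq0 w : fat br -> w != 0 -> \det (form_mx w) != 0.
Proof.
move=> br_fat w0; apply/det0P => -[u u0 uw]; move/negP: u0; apply; apply/eqP.
apply: (br_fat w^T); first by rewrite trmx_eq0.
by move=> v; rewrite form_mxE uw mul0mx mxE.
Qed.

Lemma det_form_mxZ t w : \det (form_mx (t *: w)) = t ^+ n * \det (form_mx w).
Proof.
rewrite -detZ; congr (\det _); apply/matrixP => i j.
rewrite !mxE linearZ /= big_distrr; apply: eq_bigr => k _.
by rewrite !mxE mulrCA.
Qed.

Lemma continuous_det_form_mx : continuous (fun w => \det (form_mx w)).
Proof.
apply: continuous_det => i j; under [X in continuous X]funext do rewrite mxE.
apply: continuous_mulmx_entry => k l; first exact: cst_continuous.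
under [X in continuous X]funext do rewrite mxE.
exact: coord_continuous.
Qed.

Lemma nonabelian_dims : nonabelian br -> (0 < n)%N /\ (0 < m)%N.
Proof.
have [brL _] := br_bil; move=> [u [v]].
have br0 y : br 0 y = 0.
  by have := brL (-1) 0 0 y; rewrite !scaleN1r !addNr.
case: n br brL u v br0 => [|n'] br' _ u v br0; first by rewrite (thinmx0 u) br0 eqxx.
by case: m br' u v br0 => [|m'] br' u v _; first by rewrite (thinmx0 (br' u v)) eqxx.
Qed.

Definition graded_aut_center b := exists a, graded_aut br a b.

Lemma graded_aut_center1 : graded_aut_center 1.
Proof. by exists 1; split; [rewrite det1 | split=> [|u v]; rewrite ?unitmx1 ?mulmx1]. Qed.

Lemma graded_aut_centerM b b' :
  graded_aut_center b -> graded_aut_center b' -> graded_aut_center (b *m b').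
Proof.
move=> [a [a1 [bU abr]]] [a' [a'1 [b'U a'br]]]; exists (a *m a'); split.
  by rewrite det_mulmx a1 a'1 mulr1.
by split=> [|u v]; rewrite ?unitmx_mul ?bU // mulmxA abr a'br !mulmxA.
Qed.

Lemma graded_aut_centerV b :
  graded_aut_center b -> b \in unitmx /\ graded_aut_center (invmx b).
Proof.
move=> [a [a1 [bU abr]]]; split => //.
have aU : a \in unitmx by rewrite unitmxE a1 unitr1.
exists (invmx a); split; first by rewrite det_inv a1 invr1.
split=> [|u v]; first by rewrite unitmx_inv.
by rewrite -[RHS](mulmxK bU) abr !mulmxKV.
Qed.

Lemma graded_aut_center_bounded :
  nonabelian br -> fat br -> exists K, forall b, graded_aut_center b -> `|b| <= K.
Proof.
move=> br_nab br_fat; have [n_gt0 m_gt0] := nonabelian_dims br_nab.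
pose f w := \det (form_mx w) ^+ 2.
have f_cont : continuous f.
  move=> w; apply: (@continuousM _ _ (fun w => \det (form_mx w)));
  exact: continuous_det_form_mx.
have f_hom t w : f (t *: w) = t ^+ (2 * n) * f w.
  by rewrite /f det_form_mxZ exprMn -exprM mulnC.
have f_pos w : w != 0 -> 0 < f w.
  by move=> w0; rewrite /f exprn_even_gt0 //= det_form_mx_neq0.
have d_gt0 : (0 < 2 * n)%N by rewrite muln_gt0.
have [K fK] := homogeneous_invariant_bounded m_gt0 d_gt0 f_cont f_hom f_pos.
exists K => b [a ab]; rewrite -mx_norm_tr; apply: fK => w.
by rewrite /f (det_form_mx_graded _ ab).
Qed.

End FatLieAlgebras.

Unset Implicit Arguments. Set Strict Implicit.

Theorem theorem2p1 (R : realType) (n m : nat)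
  (br : 'rV[R]_n -> 'rV[R]_n -> 'rV[R]_m) :
  bilinear_antisym br -> nonabelian br -> center_is_z br -> fat br ->
  exists S : 'M[R]_m, pos_def_inner S /\
    (forall (a : 'M[R]_n) (b : 'M[R]_m), graded_aut br a b ->
       forall x y : 'rV[R]_m,
         ((x *m b) *m S *m (y *m b)^T) 0 0 = (x *m S *m y^T) 0 0).
Proof.
move=> br_bil br_nab _ br_fat.
have [K bK] := graded_aut_center_bounded br_bil br_nab br_fat.
have [S [S_pd S_inv]] := bounded_matrix_group_invariant_form
  (graded_aut_center1 br) (@graded_aut_centerM _ _ _ br)
  (@graded_aut_centerV _ _ _ br) bK.
exists S; split => // a b ab x y.
by rewrite trmx_mul !mulmxA -(mulmxA x) -(mulmxA x) S_inv //; exists a.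
Qed.
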